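(* Let $\alpha_1,\dots,\alpha_4$ be constants, $H=H(t,t^-,q,q^-,p,p^-)$ smooth, and $X=\xi(t)\partial_t+\eta(t,q,p)\partial_q+\nu(t,q,p)\partial_p$ with $\xi(t)=\alpha t+f(t)$, $\alpha$ constant and $f$ $\tau$-periodic. Then, with $\dot\xi=D(\xi)$, $$\Big(\xi\frac{\delta}{\delta t}+\eta\frac{\delta}{\delta q}+\nu\frac{\delta}{\delta p}\Big)\Omega\equiv X\Big(\xi\frac{\delta\tilde H}{\delta t}+\eta\frac{\delta\tilde H}{\delta q}+\nu\frac{\delta\tilde H}{\delta p}\Big)+\dot\xi\Big(\xi\frac{\delta\tilde H}{\delta t}+\eta\frac{\delta\tilde H}{\delta q}+\nu\frac{\delta\tilde H}{\delta p}\Big).$$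
   Context: Constant delay $\tau>0$; $t^\pm=t\pm\tau$, $f^\pm=f(t\pm\tau)$; scalar $q,p$. $S_\pm$: forward/backward shift operators on expressions; $\xi^\pm=S_\pm(\xi)$ etc.; $H^+=S_+(H)$. $D$: total derivative acting on variables at $t^-,t,t^+$. $\tilde H=p^{-}(\alpha_{1}\dot{q}+\alpha_{2}\dot{q}^{-})+p(\alpha_{3}\dot{q}+\alpha_{4}\dot{q}^{-})-H$. For $F$ a function of $(t,t^-,q,q^-,p,p^-,\dot q,\dot q^-,\dot p,\dot p^-)$: $\frac{\delta F}{\delta p}=\frac{\partial F}{\partial p}-D\frac{\partial F}{\partial\dot p}+S_+\Big(\frac{\partial F}{\partial p^-}-D\frac{\partial F}{\partial\dot p^-}\Big)$, $\frac{\delta F}{\delta q}=\frac{\partial F}{\partial q}-D\frac{\partial F}{\partial\dot q}+S_+\Big(\frac{\partial F}{\partial q^-}-D\frac{\partial F}{\partial\dot q^-}\Big)$, $\frac{\delta F}{\delta t}=\frac{\partial F}{\partial t}+D\Big(\dot q\frac{\partial F}{\partial\dot q}+\dot p\frac{\partial F}{\partial\dot p}\Big)+S_+\Big(\frac{\partial F}{\partial t^-}+D\Big(\dot q^-\frac{\partial F}{\partial\dot q^-}+\dot p^-\frac{\partial F}{\partial\dot p^-}\Big)\Big)-D(F)$; in the left-hand side, the coefficients $\xi,\eta,\nu$ multiply the results of the operators applied to $\Omega$. $\Omega=X(\tilde H)+\tilde HD(\xi)=\nu^{-}(\alpha_{1}\dot{q}+\alpha_{2}\dot{q}^{-})+p^{-}(\alpha_{1}D(\eta)+\alpha_{2}D(\eta^{-}))+\nu(\alpha_{3}\dot{q}+\alpha_{4}\dot{q}^{-})+p(\alpha_{3}D(\eta)+\alpha_{4}D(\eta^{-}))+(\alpha_{2}p^{-}+\alpha_{4}p)\dot{q}^{-}D(\xi-\xi^{-})-\xi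 H_t-\eta H_q-\nu H_p-\xi^{-}H_{t^-}-\eta^{-}H_{q^-}-\nu^{-}H_{p^-}-HD(\xi)$. $X$ is prolonged to all variables at $t^-,t,t^+$ and their derivatives by the standard prolongation formulas ($\partial_{\dot q}$-coefficient $D(\eta)-\dot qD(\xi)$, $\partial_{\dot p}$-coefficient $D(\nu)-\dot pD(\xi)$, higher ones analogously), shifted variables carrying shifted coefficients. Variables are considered with $t^+-t=t-t^-=\tau$. *)

From Stdlib Require Import Reals ZArith List.
From Coquelicot Require Import Coquelicot.
Open Scope R_scope.

(** A function of n variables is encoded as a function of [x : nat -> R]
    reading only x 0, ..., x (n-1). *)
Definition upd (x : nat -> R) (i : nat) (s : R) : nat -> R :=
  fun j => if Nat.eqb j i then s else x j.
Definition npd (i : nat) (F : (nat -> R) -> R) : (nat -> R) -> R :=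
  fun x => Derive (fun s => F (upd x i s)) (x i).
Fixpoint ipd (l : list nat) (F : (nat -> R) -> R) : (nat -> R) -> R :=
  match l with nil => F | i :: l' => npd i (ipd l' F) end.
Definition ncont (F : (nat -> R) -> R) (x : nat -> R) : Prop :=
  forall eps, 0 < eps -> exists delta, 0 < delta /\
    forall y, (forall j, Rabs (y j - x j) < delta) -> Rabs (F y - F x) < eps.
Definition Cinf (F : (nat -> R) -> R) : Prop :=
  forall l : list nat,
    (forall x, ncont (ipd l F) x) /\
    (forall i x, ex_derive (fun s => ipd l F (upd x i s)) (x i)).

(** * Jet space of the delay problem.
    Coordinates: time variables t_k (t_0 = t, t_{-1} = t^-, t_1 = t^+),
    and derivatives q_k^(j), p_k^(j) of order j at the shifted time t_k. *)
Inductive coord : Type :=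
| CT : Z -> coord
| CQ : Z -> nat -> coord
| CP : Z -> nat -> coord.

Definition coord_eq_dec (c c' : coord) : {c = c'} + {c <> c'}.
Proof. decide equality; first [apply Nat.eq_dec | apply Z.eq_dec]. Defined.

Definition jet := coord -> R.
Definition dfun := jet -> R.

Definition dd (F : dfun) (v : jet) (z : jet) : R :=
  Derive (fun s => F (fun c => z c + s * v c)) 0.

Definition ecoord (c : coord) : jet := fun c' => if coord_eq_dec c c' then 1 else 0.
Definition pd (c : coord) (F : dfun) : dfun := fun z => dd F (ecoord c) z.

Definition vD (z : jet) : jet := fun c =>
  match c with
  | CT _ => 1
  | CQ k j => z (CQ k (S j))
  | CP k j => z (CP k (S j))
  end.
Definition Dt (F : dfun) : dfun := fun z => dd F (vD z) z.

Definition shiftc (k : Z) (c : coord) : coord :=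
  match c with
  | CT m => CT (m + k)
  | CQ m j => CQ (m + k) j
  | CP m j => CP (m + k) j
  end.
Definition shiftk (k : Z) (F : dfun) : dfun := fun z => F (fun c => z (shiftc k c)).
Definition Sp := shiftk 1.
Definition Sm := shiftk (-1).

Definition crd (c : coord) : dfun := fun z => z c.

Definition xiJ (xi : R -> R) : dfun := fun z => xi (z (CT 0)).
Definition etaJ (eta : R -> R -> R -> R) : dfun :=
  fun z => eta (z (CT 0)) (z (CQ 0 0)) (z (CP 0 0)).

Fixpoint prolQ (xi : R -> R) (eta : R -> R -> R -> R) (j : nat) : dfun :=
  match j with
  | O => etaJ eta
  | S j' => fun z => Dt (prolQ xi eta j') z - z (CQ 0 j) * Dt (xiJ xi) z
  end.
Fixpoint prolP (xi : R -> R) (nu : R -> R -> R -> R) (j : nat) : dfun :=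
  match j with
  | O => etaJ nu
  | S j' => fun z => Dt (prolP xi nu j') z - z (CP 0 j) * Dt (xiJ xi) z
  end.

Definition wX (xi : R -> R) (eta nu : R -> R -> R -> R) (z : jet) : jet :=
  fun c =>
  match c with
  | CT k => shiftk k (xiJ xi) z
  | CQ k j => shiftk k (prolQ xi eta j) z
  | CP k j => shiftk k (prolP xi nu j) z
  end.
Definition Xop (xi : R -> R) (eta nu : R -> R -> R -> R) (F : dfun) : dfun :=
  fun z => dd F (wX xi eta nu z) z.

Definition HJ (H : R -> R -> R -> R -> R -> R -> R) : dfun :=
  fun z => H (z (CT 0)) (z (CT (-1))) (z (CQ 0 0)) (z (CQ (-1) 0))
             (z (CP 0 0)) (z (CP (-1) 0)).

Definition Htilde (a1 a2 a3 a4 : R) (H : R -> R -> R -> R -> R -> R -> R) : dfun :=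
  fun z => z (CP (-1) 0) * (a1 * z (CQ 0 1) + a2 * z (CQ (-1) 1))
         + z (CP 0 0) * (a3 * z (CQ 0 1) + a4 * z (CQ (-1) 1))
         - HJ H z.

Definition Omega (a1 a2 a3 a4 : R) (H : R -> R -> R -> R -> R -> R -> R)
  (xi : R -> R) (eta nu : R -> R -> R -> R) : dfun :=
  fun z => Xop xi eta nu (Htilde a1 a2 a3 a4 H) z
           + Htilde a1 a2 a3 a4 H z * Dt (xiJ xi) z.

Definition vdp (F : dfun) : dfun :=
  fun z => pd (CP 0 0) F z - Dt (pd (CP 0 1) F) z
           + Sp (fun w => pd (CP (-1) 0) F w - Dt (pd (CP (-1) 1) F) w) z.
Definition vdq (F : dfun) : dfun :=
  fun z => pd (CQ 0 0) F z - Dt (pd (CQ 0 1) F) z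
           + Sp (fun w => pd (CQ (-1) 0) F w - Dt (pd (CQ (-1) 1) F) w) z.
Definition vdt (F : dfun) : dfun :=
  fun z => pd (CT 0) F z
           + Dt (fun w => w (CQ 0 1) * pd (CQ 0 1) F w + w (CP 0 1) * pd (CP 0 1) F w) z
           + Sp (fun w => pd (CT (-1)) F w
                  + Dt (fun u => u (CQ (-1) 1) * pd (CQ (-1) 1) F u
                              + u (CP (-1) 1) * pd (CP (-1) 1) F u) w) z
           - Dt F z.

Definition Ecomb (xi : R -> R) (eta nu : R -> R -> R -> R) (F : dfun) : dfun :=
  fun z => xiJ xi z * vdt F z + etaJ eta z * vdq F z + etaJ nu z * vdp F z.

From Stdlib Require Import Reals ZArith List.
From Coquelicot Require Import Coquelicot.
From Stdlib Require Import Lia Lra Permutation FunctionalExtensionality.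
Open Scope R_scope.

(* Every quantity in the identity is a polynomial in the jet coordinates and in partial
   derivatives of H, eta, nu and f evaluated at the base point or at its shifts.  Such
   expressions are represented syntactically and differentiated symbolically; this is sound by
   the chain rule for functions with continuous partial derivatives, and Schwarz's theorem lets
   the multi-indices of partial derivatives be sorted.  Both sides then normalise to the same
   polynomial once the derivatives of f at t +- tau are identified with those at t: this is
   where xi = alpha t + f with f tau-periodic enters, since xi^+ - xi and xi - xi^- are then
   constant. *)

(** * Partial derivatives of smooth functions of finitely many variables *)

Lemma upd_same x i s : upd x i s i = s.
Proof. unfold upd; now rewrite Nat.eqb_refl. Qed.

Lemma upd_other x i j s : j <> i -> upd x i s j = x j.
Proof. intro Hji; unfold upd; now rewrite (proj2 (Nat.eqb_neq j i) Hji). Qed.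

Lemma upd_upd x i a b : upd (upd x i a) i b = upd x i b.
Proof. apply functional_extensionality; intro j; unfold upd; now destruct (Nat.eqb j i). Qed.

Lemma upd_swap x i j a b : i <> j -> upd (upd x i a) j b = upd (upd x j b) i a.
Proof.
  intro Hij; apply functional_extensionality; intro k; unfold upd.
  destruct (Nat.eqb_spec k j), (Nat.eqb_spec k i); subst; auto; lia.
Qed.

Lemma upd_id x i : upd x i (x i) = x.
Proof.
  apply functional_extensionality; intro j; unfold upd.
  destruct (Nat.eqb_spec j i); subst; auto.
Qed.

Lemma npd_upd F x i u : npd i F (upd x i u) = Derive (fun s => F (upd x i s)) u.
Proof.
  unfold npd; rewrite upd_same.
  apply Derive_ext; intro s; now rewrite upd_upd.
Qed.

Definition depends_below (n : nat) (F : (nat -> R) -> R) : Prop :=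
  forall x y, (forall j, (j < n)%nat -> x j = y j) -> F x = F y.

Lemma depends_below_npd n F i : depends_below n F -> depends_below n (npd i F).
Proof.
  intros HF x y Hxy; unfold npd.
  destruct (Nat.lt_ge_cases i n) as [Hi|Hi].
  - rewrite (Hxy i Hi); apply Derive_ext; intro s.
    apply HF; intros j Hj; unfold upd; destruct (Nat.eqb j i); auto.
  - rewrite (Derive_ext _ (fun _ => F x)), (Derive_ext (fun s => F (upd y i s)) (fun _ => F y)),
      !Derive_const; auto.
    all: intro s; apply HF; intros j Hj; rewrite upd_other by lia; auto.
Qed.

Lemma depends_below_ipd n F l : depends_below n F -> depends_below n (ipd l F).
Proof. intro HF; induction l; simpl; auto using depends_below_npd. Qed.

Lemma Cinf_ex_derive F l x i u : Cinf F -> ex_derive (fun s => ipd l F (upd x i s)) u.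
Proof.
  intro HF; pose proof (proj2 (HF l) i (upd x i u)) as Hex.
  rewrite upd_same in Hex; revert Hex; apply ex_derive_ext; intro s; now rewrite upd_upd.
Qed.

Fixpoint sum_below (n : nat) (f : nat -> R) : R :=
  match n with O => 0 | S n => sum_below n f + f n end.

Lemma sum_below_ext n f g :
  (forall i, (i < n)%nat -> f i = g i) -> sum_below n f = sum_below n g.
Proof. induction n; intro Hfg; simpl; auto; rewrite IHn, Hfg; auto. Qed.

Lemma finite_support_bounded n (b : nat -> R) : (forall j, (n <= j)%nat -> b j = 0) ->
  exists M, 0 <= M /\ forall j, Rabs (b j) <= M.
Proof.
  revert b; induction n; intros b Hb.
  - exists 0; split; [lra|]; intro j; rewrite Hb, Rabs_R0 by lia; lra.
  - destruct (IHn (upd b n 0)) as [M [HM0 HM]].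
    { intros j Hj; destruct (Nat.eq_dec j n) as [->|Hjn];
        [apply upd_same | rewrite upd_other by auto; apply Hb; lia]. }
    exists (M + Rabs (b n)); split; [pose proof (Rabs_pos (b n)); lra|]; intro j.
    pose proof (Rabs_pos (b n)); destruct (Nat.eq_dec j n) as [->|Hjn]; [lra|].
    specialize (HM j); rewrite upd_other in HM by auto; lra.
Qed.

Section ChainRule.

Variable G : (nat -> R) -> R.
Hypothesis G_partial : forall i x u, ex_derive (fun s => G (upd x i s)) u.
Hypothesis G_partial_cont : forall i x, ncont (npd i G) x.

Lemma is_derive_partial x i u : is_derive (fun s => G (upd x i s)) u (npd i G (upd x i u)).
Proof. rewrite npd_upd; apply Derive_correct, G_partial. Qed.

Lemma mvt_partial x i u v : exists c, Rabs (c - u) <= Rabs (v - u) /\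
  G (upd x i v) - G (upd x i u) = npd i G (upd x i c) * (v - u).
Proof.
  destruct (MVT_gen (fun s => G (upd x i s)) u v (fun c => npd i G (upd x i c)))
    as [c [Hc Hmvt]].
  - intros; apply is_derive_partial.
  - intros c _; apply continuity_pt_filterlim, (ex_derive_continuous (V := R_NormedModule)).
    eexists; apply is_derive_partial.
  - exists c; split; [|exact Hmvt].
    revert Hc; unfold Rmin, Rmax; destruct (Rle_dec u v); intro Hc;
      unfold Rabs; destruct (Rcase_abs (c - u)), (Rcase_abs (v - u)); lra.
Qed.

Lemma difference_last_coordinate a b n h : exists c,
  Rabs (c - a n) <= Rabs (h * b n) /\
  G (fun i => a i + h * b i) - G (fun i => a i + h * upd b n 0 i)
  = npd n G (upd (fun i => a i + h * upd b n 0 i) n c) * (h * b n).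
Proof.
  set (y := fun i => a i + h * upd b n 0 i).
  replace (fun i => a i + h * b i) with (upd y n (a n + h * b n)).
  2:{ apply functional_extensionality; intro j; unfold y, upd.
      destruct (Nat.eqb_spec j n) as [->|]; reflexivity. }
  replace (G y) with (G (upd y n (a n))).
  2:{ f_equal; apply functional_extensionality; intro j; unfold y, upd.
      destruct (Nat.eqb_spec j n) as [->|]; [ring|reflexivity]. }
  destruct (mvt_partial y n (a n) (a n + h * b n)) as [c [Hc Hmvt]].
  exists c; rewrite Hmvt; replace (a n + h * b n - a n) with (h * b n) in * by ring; auto.
Qed.

(* By the mean value theorem the difference quotient is a value of [npd n G] at a point
   within [|h| M] of [a]; continuity of [npd n G] at [a] concludes. *)
Lemma is_derive_last_coordinate a b n M : 0 <= M -> (forall j, Rabs (b j) <= M) ->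
  is_derive (fun s => G (fun i => a i + s * b i) - G (fun i => a i + s * upd b n 0 i)) 0
    (npd n G a * b n).
Proof.
  intros HM0 HM; apply is_derive_Reals; intros eps Heps.
  destruct (G_partial_cont n a (eps / (M + 1))) as [d [Hd Hcont]].
  { apply Rdiv_lt_0_compat; lra. }
  assert (Hdelta : 0 < d / (M + 1)) by (apply Rdiv_lt_0_compat; lra).
  exists (mkposreal _ Hdelta); intros h Hh0 Hh; simpl in Hh.
  assert (HhM : Rabs h * M < d).
  { assert (d / (M + 1) * (M + 1) = d) by (field; lra).
    pose proof (Rabs_pos h); nra. }
  rewrite Rplus_0_l.
  replace (fun i => a i + 0 * b i) with a by (apply functional_extensionality; intro; ring).
  replace (fun i => a i + 0 * upd b n 0 i) with a
    by (apply functional_extensionality; intro; ring).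
  destruct (difference_last_coordinate a b n h) as [c [Hc ->]].
  set (y := fun i => a i + h * upd b n 0 i).
  replace ((npd n G (upd y n c) * (h * b n) - (G a - G a)) / h - npd n G a * b n)
    with ((npd n G (upd y n c) - npd n G a) * b n) by (field; auto).
  assert (Hclose : Rabs (npd n G (upd y n c) - npd n G a) < eps / (M + 1)).
  { apply Hcont; intro j; pose proof (Rabs_pos h); destruct (Nat.eq_dec j n) as [->|Hjn].
    - rewrite upd_same; rewrite Rabs_mult in Hc; pose proof (HM n); nra.
    - rewrite upd_other by auto; unfold y; rewrite upd_other by auto.
      replace (a j + h * b j - a j) with (h * b j) by ring.
      rewrite Rabs_mult; pose proof (HM j); nra. }
  assert (eps / (M + 1) * (M + 1) = eps) by (field; lra).
  rewrite Rabs_mult; pose proof (HM n); pose proof (Rabs_pos (b n));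
    pose proof (Rabs_pos (npd n G (upd y n c) - npd n G a)); nra.
Qed.

Lemma chain_rule n a b : (forall j, (n <= j)%nat -> b j = 0) ->
  is_derive (fun s => G (fun i => a i + s * b i)) 0 (sum_below n (fun i => npd i G a * b i)).
Proof.
  revert b; induction n; intros b Hb; simpl.
  - apply is_derive_ext with (fun _ => G a); [|apply (is_derive_const (V := R_NormedModule))].
    intro s; f_equal; apply functional_extensionality; intro j; rewrite Hb by lia; ring.
  - assert (Hb' : forall j, (n <= j)%nat -> upd b n 0 j = 0).
    { intros j Hj; destruct (Nat.eq_dec j n) as [->|Hjn];
        [apply upd_same | rewrite upd_other by auto; apply Hb; lia]. }
    destruct (finite_support_bounded _ b Hb) as [M [HM0 HM]].
    rewrite (sum_below_ext n _ (fun i => npd i G a * upd b n 0 i))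
      by (intros i Hi; rewrite upd_other by lia; auto).
    apply is_derive_ext with (fun s => G (fun i => a i + s * upd b n 0 i)
      + (G (fun i => a i + s * b i) - G (fun i => a i + s * upd b n 0 i)));
      [intro; simpl; ring|].
    apply (is_derive_plus (V := R_NormedModule)); [exact (IHn _ Hb')|].
    exact (is_derive_last_coordinate a b n M HM0 HM).
Qed.

End ChainRule.

Section MixedPartials.

Variables (x : nat -> R) (i j : nat).
Hypothesis Hij : i <> j.

Definition plane (u v : R) : nat -> R := upd (upd x i u) j v.

Lemma upd_plane_i u v s : upd (plane u v) i s = plane s v.
Proof.
  apply functional_extensionality; intro k; unfold plane, upd.
  destruct (Nat.eqb_spec k i), (Nat.eqb_spec k j); subst; auto; lia.
Qed.

Lemma upd_plane_j u v s : upd (plane u v) j s = plane u s.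
Proof. apply upd_upd. Qed.

Lemma Derive_plane_i F u v : Derive (fun s => F (plane s v)) u = npd i F (plane u v).
Proof.
  rewrite <- (upd_plane_i u v u); rewrite npd_upd.
  apply Derive_ext; intro s; now rewrite upd_plane_i.
Qed.

Lemma Derive_plane_j F u v : Derive (fun s => F (plane u s)) v = npd j F (plane u v).
Proof.
  rewrite <- (upd_plane_j u v v); rewrite npd_upd.
  apply Derive_ext; intro s; now rewrite upd_plane_j.
Qed.

Lemma ex_derive_plane_i F l u v : Cinf F -> ex_derive (fun s => ipd l F (plane s v)) u.
Proof.
  intro HF; eapply ex_derive_ext; [|exact (Cinf_ex_derive F l (plane u v) i u HF)].
  intro s; simpl; now rewrite upd_plane_i.
Qed.

Lemma ex_derive_plane_j F l u v : Cinf F -> ex_derive (fun s => ipd l F (plane u s)) v.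
Proof.
  intro HF; eapply ex_derive_ext; [|exact (Cinf_ex_derive F l (plane u v) j v HF)].
  intro s; simpl; now rewrite upd_plane_j.
Qed.

Lemma ncont_plane F : ncont F x -> continuity_2d_pt (fun u v => F (plane u v)) (x i) (x j).
Proof.
  intros HF eps; destruct (HF eps (cond_pos eps)) as [d [Hd Hclose]].
  exists (mkposreal d Hd); intros u v Hu Hv; simpl in *.
  replace (F (plane (x i) (x j))) with (F x) by (unfold plane; now rewrite !upd_id).
  apply Hclose; intro k; unfold plane, upd.
  destruct (Nat.eqb_spec k j); subst; auto.
  destruct (Nat.eqb_spec k i); subst; auto.
  rewrite Rminus_diag, Rabs_R0; auto.
Qed.

Lemma npd_comm F l : Cinf F -> npd i (npd j (ipd l F)) x = npd j (npd i (ipd l F)) x.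
Proof.
  intro HF; set (K := ipd l F).
  assert (Hx : x = plane (x i) (x j)) by (unfold plane; now rewrite !upd_id).
  rewrite Hx, <- Derive_plane_i, <- Derive_plane_j.
  rewrite (Derive_ext _ (fun u => Derive (fun v => K (plane u v)) (x j)))
    by (intro u; symmetry; apply Derive_plane_j).
  rewrite (Derive_ext (fun v => npd i K (plane (x i) v))
                      (fun v => Derive (fun u => K (plane u v)) (x i)))
    by (intro v; symmetry; apply Derive_plane_i).
  apply Schwarz.
  - exists (mkposreal 1 Rlt_0_1); intros u v _ _; repeat split.
    + now apply ex_derive_plane_i.
    + now apply ex_derive_plane_j.
    + apply ex_derive_ext with (fun s => ipd (j :: l) F (plane s v));
        [intro s; symmetry; apply Derive_plane_j | now apply ex_derive_plane_i].
    + apply ex_derive_ext with (fun s => ipd (i :: l) F (plane u s));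
        [intro s; symmetry; apply Derive_plane_i | now apply ex_derive_plane_j].
  - eapply continuity_2d_pt_ext; [|exact (ncont_plane _ (proj1 (HF (i :: j :: l)) x))].
    intros u v; simpl; rewrite <- Derive_plane_i.
    apply Derive_ext; intro s; symmetry; apply Derive_plane_j.
  - eapply continuity_2d_pt_ext; [|exact (ncont_plane _ (proj1 (HF (j :: i :: l)) x))].
    intros u v; simpl; rewrite <- Derive_plane_j.
    apply Derive_ext; intro s; symmetry; apply Derive_plane_i.
Qed.

End MixedPartials.

Fixpoint sort_insert (i : nat) (l : list nat) : list nat :=
  match l with
  | nil => i :: nil
  | j :: l' => if Nat.leb i j then i :: j :: l' else j :: sort_insert i l'
  end.

Lemma Permutation_sort_insert i l : Permutation (i :: l) (sort_insert i l).
Proof.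
  induction l as [|j l IH]; simpl; auto.
  destruct (Nat.leb i j); auto.
  eapply perm_trans; [apply perm_swap | apply perm_skip, IH].
Qed.

Lemma ipd_Permutation F l l' : Cinf F -> Permutation l l' -> ipd l F = ipd l' F.
Proof.
  intros HF P; induction P; simpl; try congruence.
  destruct (Nat.eq_dec x y) as [->|Hxy]; auto.
  apply functional_extensionality; intro z; now apply npd_comm.
Qed.

Lemma npd_ipd_sort_insert F i l : Cinf F -> npd i (ipd l F) = ipd (sort_insert i l) F.
Proof. intro HF; apply (ipd_Permutation F (i :: l)), Permutation_sort_insert; auto. Qed.

Lemma Derive_periodic g T : (forall u, g (u + T) = g u) ->
  forall u, Derive g (u + T) = Derive g u.
Proof.
  intros Hg u; unfold Derive; do 2 f_equal; apply functional_extensionality; intro h.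
  now rewrite Rplus_assoc, (Rplus_comm T h), <- Rplus_assoc, !Hg.
Qed.

Lemma npd_periodic F T i : (forall x s, F (upd x 0 (s + T)) = F (upd x 0 s)) ->
  forall x s, npd i F (upd x 0 (s + T)) = npd i F (upd x 0 s).
Proof.
  intros HF x s; destruct (Nat.eq_dec i 0) as [->|Hi].
  - rewrite !npd_upd; apply Derive_periodic; intro u; apply HF.
  - unfold npd; rewrite !upd_other by auto; apply Derive_ext; intro u.
    rewrite !(upd_swap _ 0 i) by auto; apply HF.
Qed.

Lemma ipd_periodic F T l : (forall x s, F (upd x 0 (s + T)) = F (upd x 0 s)) ->
  forall x s, ipd l F (upd x 0 (s + T)) = ipd l F (upd x 0 s).
Proof. intro HF; induction l; simpl; auto using npd_periodic. Qed.

Lemma ipd_periodic_coord0 f T l : (forall t, f (t + T) = f t) ->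
  forall x y, x 0%nat = y 0%nat + T ->
  ipd l (fun x => f (x 0%nat)) x = ipd l (fun x => f (x 0%nat)) y.
Proof.
  intros Hf x y Hxy.
  assert (Hdep : depends_below 1 (ipd l (fun x => f (x 0%nat)))).
  { apply depends_below_ipd; intros u w Huw; now rewrite Huw by lia. }
  rewrite (Hdep x (upd y 0 (y 0%nat + T))).
  - rewrite ipd_periodic, upd_id; [reflexivity|].
    intros u s; cbv beta; rewrite !upd_same; apply Hf.
  - intros j Hj; replace j with 0%nat by lia; now rewrite upd_same.
Qed.

(** * Symbolic differential expressions *)

Inductive sym := symH | symEta | symNu | symF.

(* [JAtom g l k] stands for the iterated partial derivative [ipd l] of the function
   named [g], evaluated at the arguments of [g] shifted by [k] delays. *)
Inductive jexpr :=
| JZero | JOne | JCst (r : R) | JCrd (c : coord)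
| JAdd (a b : jexpr) | JMul (a b : jexpr) | JNeg (a : jexpr)
| JAtom (g : sym) (l : list nat) (k : Z).

Definition sym_args (g : sym) : list coord :=
  match g with
  | symH => CT 0 :: CT (-1) :: CQ 0 0 :: CQ (-1) 0 :: CP 0 0 :: CP (-1) 0 :: nil
  | symEta | symNu => CT 0 :: CQ 0 0 :: CP 0 0 :: nil
  | symF => CT 0 :: nil
  end.

Definition arity (g : sym) : nat := length (sym_args g).

Definition sym_point (g : sym) (k : Z) (z : jet) : nat -> R :=
  fun i => z (shiftc k (nth i (sym_args g) (CT 0))).

Definition atom_val (env : sym -> (nat -> R) -> R) (g : sym) (l : list nat) (k : Z)
  (z : jet) : R :=
  ipd l (env g) (sym_point g k z).

Fixpoint jeval (env : sym -> (nat -> R) -> R) (e : jexpr) (z : jet) : R :=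
  match e with
  | JZero => 0
  | JOne => 1
  | JCst r => r
  | JCrd c => z c
  | JAdd a b => jeval env a z + jeval env b z
  | JMul a b => jeval env a z * jeval env b z
  | JNeg a => - jeval env a z
  | JAtom g l k => atom_val env g l k z
  end.

Definition sadd (a b : jexpr) : jexpr :=
  match a, b with JZero, _ => b | _, JZero => a | _, _ => JAdd a b end.
Definition smul (a b : jexpr) : jexpr :=
  match a, b with
  | JZero, _ | _, JZero => JZero
  | JOne, _ => b
  | _, JOne => a
  | _, _ => JMul a b
  end.
Definition sopp (a : jexpr) : jexpr := match a with JZero => JZero | _ => JNeg a end.

Lemma jeval_sadd env a b z : jeval env (sadd a b) z = jeval env a z + jeval env b z.
Proof. destruct a, b; simpl; ring. Qed.

Lemma jeval_smul env a b z : jeval env (smul a b) z = jeval env a z * jeval env b z.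
Proof. destruct a, b; simpl; ring. Qed.

Lemma jeval_sopp env a z : jeval env (sopp a) z = - jeval env a z.
Proof. destruct a; simpl; ring. Qed.

Fixpoint atom_der (g : sym) (l : list nat) (k : Z) (v : coord -> jexpr) (n : nat) : jexpr :=
  match n with
  | O => JZero
  | S n => sadd (atom_der g l k v n)
                (smul (JAtom g (sort_insert n l) k) (v (shiftc k (nth n (sym_args g) (CT 0)))))
  end.

(* Multi-indices of atoms are kept sorted, so that equal mixed partial derivatives are
   syntactically equal. *)
Fixpoint der (e : jexpr) (v : coord -> jexpr) : jexpr :=
  match e with
  | JZero | JOne | JCst _ => JZero
  | JCrd c => v c
  | JAdd a b => sadd (der a v) (der b v)
  | JMul a b => sadd (smul (der a v) b) (smul a (der b v))
  | JNeg a => sopp (der a v)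
  | JAtom g l k => atom_der g l k v (arity g)
  end.

Fixpoint shift_jexpr (k : Z) (e : jexpr) : jexpr :=
  match e with
  | JCrd c => JCrd (shiftc k c)
  | JAdd a b => JAdd (shift_jexpr k a) (shift_jexpr k b)
  | JMul a b => JMul (shift_jexpr k a) (shift_jexpr k b)
  | JNeg a => JNeg (shift_jexpr k a)
  | JAtom g l m => JAtom g l (m + k)
  | _ => e
  end.

Definition smooth_env (env : sym -> (nat -> R) -> R) : Prop :=
  forall g, Cinf (env g) /\ depends_below (arity g) (env g).

Lemma shiftc_shiftc k m c : shiftc k (shiftc m c) = shiftc (m + k) c.
Proof. destruct c; simpl; now rewrite Z.add_assoc. Qed.

Lemma jeval_shift_jexpr env k e z :
  jeval env (shift_jexpr k e) z = jeval env e (fun c => z (shiftc k c)).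
Proof.
  induction e; simpl; try rewrite IHe1, IHe2; try rewrite IHe; auto.
  unfold atom_val, sym_point; f_equal.
  apply functional_extensionality; intro i; now rewrite shiftc_shiftc.
Qed.

Lemma jeval_atom_der env g l k v n z :
  jeval env (atom_der g l k v n) z
  = sum_below n (fun i => atom_val env g (sort_insert i l) k z
                          * jeval env (v (shiftc k (nth i (sym_args g) (CT 0)))) z).
Proof.
  induction n; cbn [atom_der sum_below jeval]; auto.
  now rewrite jeval_sadd, jeval_smul, IHn.
Qed.

Lemma is_derive_atom env g l k w z : smooth_env env ->
  is_derive (fun s => atom_val env g l k (fun c => z c + s * w c)) 0
    (sum_below (arity g) (fun i => atom_val env g (sort_insert i l) k z
                                  * w (shiftc k (nth i (sym_args g) (CT 0))))).
Proof.
  intro HE; destruct (HE g) as [HC HD].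
  set (b := fun i => if Nat.ltb i (arity g) then sym_point g k w i else 0).
  apply is_derive_ext with (fun s => ipd l (env g) (fun i => sym_point g k z i + s * b i)).
  { intro s; apply (depends_below_ipd _ _ l HD); intros j Hj; unfold b.
    destruct (Nat.ltb_spec j (arity g)); [reflexivity | lia]. }
  rewrite (sum_below_ext _ _ (fun i => npd i (ipd l (env g)) (sym_point g k z) * b i)).
  - apply chain_rule.
    + intros; now apply Cinf_ex_derive.
    + intros i x; exact (proj1 (HC (i :: l)) x).
    + intros j Hj; unfold b; destruct (Nat.ltb_spec j (arity g)); [lia | auto].
  - intros i Hi; unfold atom_val, b; rewrite npd_ipd_sort_insert by auto.
    destruct (Nat.ltb_spec i (arity g)); [reflexivity | lia].
Qed.

Lemma is_derive_der env e v z : smooth_env env ->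
  is_derive (fun s => jeval env e (fun c => z c + s * jeval env (v c) z)) 0
    (jeval env (der e v) z).
Proof.
  intro HE.
  assert (Hz : (fun c => z c + 0 * jeval env (v c) z) = z)
    by (apply functional_extensionality; intro; ring).
  induction e; simpl.
  1-3: apply (is_derive_const (V := R_NormedModule)).
  - auto_derive; auto; ring.
  - rewrite jeval_sadd; now apply (is_derive_plus (V := R_NormedModule)).
  - rewrite jeval_sadd, !jeval_smul.
    pose proof (is_derive_mult _ _ 0 _ _ IHe1 IHe2 Rmult_comm) as Hmul.
    simpl in Hmul; now rewrite Hz in Hmul.
  - rewrite jeval_sopp; now apply (is_derive_opp (V := R_NormedModule)).
  - rewrite jeval_atom_der; now apply is_derive_atom.
Qed.

Lemma dd_jeval env e v z : smooth_env env ->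
  dd (jeval env e) (fun c => jeval env (v c) z) z = jeval env (der e v) z.
Proof. intro HE; apply is_derive_unique, is_derive_der, HE. Qed.

Definition vD_jexpr (c : coord) : jexpr :=
  match c with
  | CT _ => JOne
  | CQ k j => JCrd (CQ k (S j))
  | CP k j => JCrd (CP k (S j))
  end.

Definition ecoord_jexpr (c : coord) : coord -> jexpr :=
  fun d => if coord_eq_dec c d then JOne else JZero.

Lemma Dt_jeval env e : smooth_env env -> Dt (jeval env e) = jeval env (der e vD_jexpr).
Proof.
  intro HE; apply functional_extensionality; intro z; unfold Dt.
  rewrite <- dd_jeval by auto; f_equal.
  apply functional_extensionality; intro c; now destruct c.
Qed.

Lemma pd_jeval env c e : smooth_env env -> pd c (jeval env e) = jeval env (der e (ecoord_jexpr c)).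
Proof.
  intro HE; apply functional_extensionality; intro z; unfold pd.
  rewrite <- dd_jeval by auto; f_equal.
  apply functional_extensionality; intro d; unfold ecoord, ecoord_jexpr.
  now destruct (coord_eq_dec c d).
Qed.

Lemma shiftk_jeval env k e : shiftk k (jeval env e) = jeval env (shift_jexpr k e).
Proof.
  apply functional_extensionality; intro z; unfold shiftk; now rewrite jeval_shift_jexpr.
Qed.

(** * Variational derivatives and the prolonged symmetry *)

Definition vd_jexpr (C : Z -> nat -> coord) (e : jexpr) : jexpr :=
  JAdd (JAdd (der e (ecoord_jexpr (C 0%Z 0%nat)))
             (JNeg (der (der e (ecoord_jexpr (C 0%Z 1%nat))) vD_jexpr)))
      (shift_jexpr 1 (JAdd (der e (ecoord_jexpr (C (-1)%Z 0%nat)))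
                         (JNeg (der (der e (ecoord_jexpr (C (-1)%Z 1%nat))) vD_jexpr)))).

Lemma vd_jeval env C e : smooth_env env ->
  (fun z => pd (C 0%Z 0%nat) (jeval env e) z - Dt (pd (C 0%Z 1%nat) (jeval env e)) z
     + Sp (fun w => pd (C (-1)%Z 0%nat) (jeval env e) w
                    - Dt (pd (C (-1)%Z 1%nat) (jeval env e)) w) z)
  = jeval env (vd_jexpr C e).
Proof.
  intro HE; apply functional_extensionality; intro z.
  rewrite !pd_jeval, !Dt_jeval by auto.
  unfold Sp, shiftk; simpl; rewrite !jeval_shift_jexpr; ring.
Qed.

Lemma vdq_jeval env e : smooth_env env -> vdq (jeval env e) = jeval env (vd_jexpr CQ e).
Proof. exact (vd_jeval env CQ e). Qed.

Lemma vdp_jeval env e : smooth_env env -> vdp (jeval env e) = jeval env (vd_jexpr CP e).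
Proof. exact (vd_jeval env CP e). Qed.

Definition velocity_pd_jexpr (k : Z) (e : jexpr) : jexpr :=
  JAdd (JMul (JCrd (CQ k 1)) (der e (ecoord_jexpr (CQ k 1))))
       (JMul (JCrd (CP k 1)) (der e (ecoord_jexpr (CP k 1)))).

Lemma velocity_pd_jeval env k e : smooth_env env ->
  (fun w => w (CQ k 1) * pd (CQ k 1) (jeval env e) w
            + w (CP k 1) * pd (CP k 1) (jeval env e) w)
  = jeval env (velocity_pd_jexpr k e).
Proof. intro HE; now rewrite !pd_jeval. Qed.

Definition vdt_jexpr (e : jexpr) : jexpr :=
  JAdd (JAdd (JAdd (der e (ecoord_jexpr (CT 0))) (der (velocity_pd_jexpr 0 e) vD_jexpr))
             (shift_jexpr 1 (JAdd (der e (ecoord_jexpr (CT (-1))))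
                                  (der (velocity_pd_jexpr (-1) e) vD_jexpr))))
       (JNeg (der e vD_jexpr)).

Lemma vdt_jeval env e : smooth_env env -> vdt (jeval env e) = jeval env (vdt_jexpr e).
Proof.
  intro HE; apply functional_extensionality; intro z; unfold vdt.
  rewrite !velocity_pd_jeval, !pd_jeval, !Dt_jeval by auto.
  unfold Sp, shiftk; simpl; rewrite !jeval_shift_jexpr; ring.
Qed.

Definition eta_jexpr : jexpr := JAtom symEta nil 0.
Definition nu_jexpr : jexpr := JAtom symNu nil 0.
Definition xi_jexpr (alpha : R) : jexpr :=
  JAdd (JMul (JCst alpha) (JCrd (CT 0))) (JAtom symF nil 0).

Fixpoint prol_jexpr (var : nat -> coord) (base xe : jexpr) (j : nat) : jexpr :=
  match j with
  | O => base
  | S j' => JAdd (der (prol_jexpr var base xe j') vD_jexpr)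
                 (JNeg (JMul (JCrd (var j)) (der xe vD_jexpr)))
  end.

Definition wX_jexpr (xe : jexpr) (c : coord) : jexpr :=
  match c with
  | CT k => shift_jexpr k xe
  | CQ k j => shift_jexpr k (prol_jexpr (CQ 0) eta_jexpr xe j)
  | CP k j => shift_jexpr k (prol_jexpr (CP 0) nu_jexpr xe j)
  end.

Definition Htilde_jexpr (a1 a2 a3 a4 : R) : jexpr :=
  JAdd (JAdd (JMul (JCrd (CP (-1) 0))
                   (JAdd (JMul (JCst a1) (JCrd (CQ 0 1))) (JMul (JCst a2) (JCrd (CQ (-1) 1)))))
             (JMul (JCrd (CP 0 0))
                   (JAdd (JMul (JCst a3) (JCrd (CQ 0 1))) (JMul (JCst a4) (JCrd (CQ (-1) 1))))))
       (JNeg (JAtom symH nil 0)).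

Section Prolongation.

Variables (env : sym -> (nat -> R) -> R) (xi : R -> R) (eta nu : R -> R -> R -> R).
Variable xe : jexpr.
Hypotheses (HE : smooth_env env) (Hxi : xiJ xi = jeval env xe)
  (Heta : etaJ eta = jeval env eta_jexpr) (Hnu : etaJ nu = jeval env nu_jexpr).

Lemma prolQ_jeval j : prolQ xi eta j = jeval env (prol_jexpr (CQ 0) eta_jexpr xe j).
Proof.
  induction j; simpl; auto.
  rewrite IHj, Hxi, !Dt_jeval by auto; apply functional_extensionality; intro z; simpl; ring.
Qed.

Lemma prolP_jeval j : prolP xi nu j = jeval env (prol_jexpr (CP 0) nu_jexpr xe j).
Proof.
  induction j; simpl; auto.
  rewrite IHj, Hxi, !Dt_jeval by auto; apply functional_extensionality; intro z; simpl; ring.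
Qed.

Lemma Xop_jeval e : Xop xi eta nu (jeval env e) = jeval env (der e (wX_jexpr xe)).
Proof.
  apply functional_extensionality; intro z; unfold Xop.
  rewrite <- dd_jeval by auto; f_equal; apply functional_extensionality; intro c.
  destruct c; unfold wX, wX_jexpr; rewrite <- shiftk_jeval.
  - now rewrite Hxi.
  - now rewrite prolQ_jeval.
  - now rewrite prolP_jeval.
Qed.

Definition Ecomb_jexpr (e : jexpr) : jexpr :=
  JAdd (JAdd (JMul xe (vdt_jexpr e)) (JMul eta_jexpr (vd_jexpr CQ e)))
       (JMul nu_jexpr (vd_jexpr CP e)).

Lemma Ecomb_jeval e : Ecomb xi eta nu (jeval env e) = jeval env (Ecomb_jexpr e).
Proof.
  apply functional_extensionality; intro z; unfold Ecomb.
  now rewrite vdt_jeval, vdq_jeval, vdp_jeval, Hxi, Heta, Hnu.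
Qed.

Definition Omega_jexpr (a1 a2 a3 a4 : R) : jexpr :=
  JAdd (der (Htilde_jexpr a1 a2 a3 a4) (wX_jexpr xe))
       (JMul (Htilde_jexpr a1 a2 a3 a4) (der xe vD_jexpr)).

Lemma Omega_jeval a1 a2 a3 a4 H :
  Htilde a1 a2 a3 a4 H = jeval env (Htilde_jexpr a1 a2 a3 a4) ->
  Omega a1 a2 a3 a4 H xi eta nu = jeval env (Omega_jexpr a1 a2 a3 a4).
Proof.
  intro Ht; apply functional_extensionality; intro z; unfold Omega.
  now rewrite Ht, Xop_jeval, Hxi, Dt_jeval.
Qed.

End Prolongation.

Definition delay_env (H : R -> R -> R -> R -> R -> R -> R) (eta nu : R -> R -> R -> R)
  (f : R -> R) (g : sym) : (nat -> R) -> R :=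
  match g with
  | symH => fun x => H (x 0%nat) (x 1%nat) (x 2%nat) (x 3%nat) (x 4%nat) (x 5%nat)
  | symEta => fun x => eta (x 0%nat) (x 1%nat) (x 2%nat)
  | symNu => fun x => nu (x 0%nat) (x 1%nat) (x 2%nat)
  | symF => fun x => f (x 0%nat)
  end.

Lemma smooth_delay_env H eta nu f
  (HH : Cinf (fun x => H (x 0%nat) (x 1%nat) (x 2%nat) (x 3%nat) (x 4%nat) (x 5%nat)))
  (Hf : Cinf (fun x => f (x 0%nat)))
  (Heta : Cinf (fun x => eta (x 0%nat) (x 1%nat) (x 2%nat)))
  (Hnu : Cinf (fun x => nu (x 0%nat) (x 1%nat) (x 2%nat))) :
  smooth_env (delay_env H eta nu f).
Proof.
  intro g; destruct g; split; auto; intros x y Hxy; unfold arity in Hxy; simpl in Hxy; simpl;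
    repeat rewrite Hxy by lia; reflexivity.
Qed.

Lemma xiJ_jeval H eta nu f alpha xi : (forall t, xi t = alpha * t + f t) ->
  xiJ xi = jeval (delay_env H eta nu f) (xi_jexpr alpha).
Proof. intro Hxi; apply functional_extensionality; intro z; unfold xiJ; now rewrite Hxi. Qed.

Lemma Htilde_jeval H eta nu f a1 a2 a3 a4 :
  Htilde a1 a2 a3 a4 H = jeval (delay_env H eta nu f) (Htilde_jexpr a1 a2 a3 a4).
Proof.
  apply functional_extensionality; intro z; unfold Htilde; cbn [jeval].
  unfold Rminus; reflexivity.
Qed.

Lemma atom_val_symF_shift H eta nu f tau l k m z : (forall t, f (t + tau) = f t) ->
  z (CT k) = z (CT m) + tau ->
  atom_val (delay_env H eta nu f) symF l k z = atom_val (delay_env H eta nu f) symF l m z.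
Proof. intros Hper Hz; now apply ipd_periodic_coord0 with tau. Qed.

Lemma Ecomb_Omega_jeval_identity env alpha a1 a2 a3 a4 (z : jet)
  (HF1 : forall l, atom_val env symF l 1 z = atom_val env symF l 0 z)
  (HFm1 : forall l, atom_val env symF l (-1) z = atom_val env symF l 0 z) :
  let xe := xi_jexpr alpha in
  let Ht := Htilde_jexpr a1 a2 a3 a4 in
  jeval env (Ecomb_jexpr xe (Omega_jexpr xe a1 a2 a3 a4)) z
  = jeval env (JAdd (der (Ecomb_jexpr xe Ht) (wX_jexpr xe))
                    (JMul (der xe vD_jexpr) (Ecomb_jexpr xe Ht))) z.
Proof.
  intros xe Ht.
  match goal with |- jeval env ?A z = jeval env ?B z =>
    let A' := eval vm_compute in A in
    let B' := eval vm_compute in B in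
    change (jeval env A' z = jeval env B' z) end.
  cbn [jeval]; rewrite ?HF1, ?HFm1.
  repeat match goal with |- context [atom_val ?env ?g ?l ?k ?z] =>
    generalize (atom_val env g l k z); intro end.
  ring.
Qed.

Theorem lemma4 (a1 a2 a3 a4 : R) (tau : R) (Htau : 0 < tau)
  (H : R -> R -> R -> R -> R -> R -> R)
  (HH : Cinf (fun x => H (x 0%nat) (x 1%nat) (x 2%nat) (x 3%nat) (x 4%nat) (x 5%nat)))
  (alpha : R) (f : R -> R)
  (Hf : Cinf (fun x => f (x 0%nat)))
  (Hper : forall t, f (t + tau) = f t)
  (xi : R -> R) (Hxi : forall t, xi t = alpha * t + f t)
  (eta nu : R -> R -> R -> R)
  (Heta : Cinf (fun x => eta (x 0%nat) (x 1%nat) (x 2%nat)))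
  (Hnu : Cinf (fun x => nu (x 0%nat) (x 1%nat) (x 2%nat)))
  (z : jet)
  (Hz1 : z (CT 1) = z (CT 0) + tau)
  (Hzm1 : z (CT (-1)) = z (CT 0) - tau) :
  Ecomb xi eta nu (Omega a1 a2 a3 a4 H xi eta nu) z
  = Xop xi eta nu (Ecomb xi eta nu (Htilde a1 a2 a3 a4 H)) z
    + Dt (xiJ xi) z * Ecomb xi eta nu (Htilde a1 a2 a3 a4 H) z.
Proof.
  set (env := delay_env H eta nu f).
  assert (HE : smooth_env env) by (apply smooth_delay_env; auto).
  pose proof (xiJ_jeval H eta nu f alpha xi Hxi) as Hx.
  pose proof (Htilde_jeval H eta nu f a1 a2 a3 a4) as Ht.
  pose proof (Xop_jeval env xi eta nu _ HE Hx eq_refl eq_refl) as HX.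
  pose proof (Ecomb_jeval env xi eta nu _ HE Hx eq_refl eq_refl) as HEc.
  rewrite (Omega_jeval env xi eta nu _ HE Hx eq_refl eq_refl _ _ _ _ H Ht), Ht, !HEc, HX, Hx,
    Dt_jeval by exact HE.
  apply Ecomb_Omega_jeval_identity; intro l; [|symmetry];
    apply atom_val_symF_shift with tau; auto; lra.
Qed.
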